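(* Let $\mathcal{H}$ be a separable Hilbert space, let $\{f_n\}_{n=1}^\infty$ be a pseudo-Riesz sequence in $\mathcal{H}$, and let $\{g_n\}_{n=1}^\infty$ be a pseudo-codual sequence of $\{f_n\}$ which is a Bessel sequence. Then $\{g_n\}$ is a pseudo-Riesz sequence.
   Context: A Bessel sequence in $\mathcal{H}$ is a pseudo-Riesz sequence if it can be transformed into a Riesz sequence by removing a finite number of appropriate vectors from it. A sequence $\{g_n\}$ in $\mathcal{H}$ is a pseudo-codual sequence of the Bessel sequence $\{f_n\}$ if there is a finite-codimensional subspace $V\subseteq\ell^2(\mathbb{N})$ such that $\sum_{k=1}^\infty\langle g_n,f_k\rangle c_k=c_n$ for all $n\in\mathbb{N}$ and all $c=(c_k)\in V$. *)

From Stdlib Require Import Reals List.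
From Coquelicot Require Import Coquelicot.
Open Scope R_scope.

Notation CC := Complex.C.

Record HilbertSpace := {
  hvec :> ModuleSpace C_Ring;
  hinner : hvec -> hvec -> CC;
  hinner_add_l : forall x y z : hvec,
      hinner (plus x y) z = Cplus (hinner x z) (hinner y z);
  hinner_scal_l : forall (a : CC) (x y : hvec),
      hinner (scal a x) y = Cmult a (hinner x y);
  hinner_conj : forall x y : hvec, hinner y x = Cconj (hinner x y);
  hinner_pos : forall x : hvec, 0 <= Re (hinner x x);
  hinner_def : forall x : hvec, hinner x x = RtoC 0 -> x = zero;
  hcomplete : forall u : nat -> hvec,
      (forall eps, 0 < eps -> exists N, forall m n, (N <= m)%nat -> (N <= n)%nat ->
          sqrt (Re (hinner (minus (u m) (u n)) (minus (u m) (u n)))) < eps) ->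
      exists l : hvec, forall eps, 0 < eps -> exists N, forall n, (N <= n)%nat ->
          sqrt (Re (hinner (minus (u n) l) (minus (u n) l))) < eps;
  hseparable : exists d : nat -> hvec, forall (x : hvec) eps, 0 < eps ->
      exists n, sqrt (Re (hinner (minus x (d n)) (minus x (d n)))) < eps
}.

Arguments hinner {h}.

Definition hnorm {H : HilbertSpace} (x : H) : R := sqrt (Re (hinner x x)).

Definition cseries (a : nat -> CC) (l : CC) : Prop :=
  @is_series C_AbsRing C_NormedModule a l.

Definition Bessel {H : HilbertSpace} (f : nat -> H) : Prop :=
  exists B, 0 < B /\ forall x : H,
    ex_series (fun n => (Cmod (hinner x (f n)))^2) /\
    Series (fun n => (Cmod (hinner x (f n)))^2) <= B * (hnorm x)^2.

(* The family {f_n : n not in F} is a Riesz sequence: Riesz bounds for all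
   finitely supported coefficient sequences vanishing on F.
   (sum_n a N = a 0 + ... + a N.) *)
Definition Riesz_off {H : HilbertSpace} (f : nat -> H) (F : list nat) : Prop :=
  exists A B, 0 < A /\ 0 < B /\
    forall (N : nat) (c : nat -> CC), (forall n, In n F -> c n = RtoC 0) ->
      A * sum_n (fun n => (Cmod (c n))^2) N
        <= (hnorm (sum_n (fun n => scal (c n) (f n)) N))^2
      /\ (hnorm (sum_n (fun n => scal (c n) (f n)) N))^2
        <= B * sum_n (fun n => (Cmod (c n))^2) N.

Definition Riesz_sequence {H : HilbertSpace} (f : nat -> H) : Prop :=
  Riesz_off f nil.

Definition pseudo_Riesz {H : HilbertSpace} (f : nat -> H) : Prop :=
  Bessel f /\ exists F : list nat, Riesz_off f F.

Definition in_l2 (c : nat -> CC) : Prop :=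
  ex_series (fun k => (Cmod (c k))^2).

Definition finite_codim_subspace (V : (nat -> CC) -> Prop) : Prop :=
  (forall c, V c -> in_l2 c) /\
  V (fun _ => RtoC 0) /\
  (forall c d, V c -> V d -> V (fun k => Cplus (c k) (d k))) /\
  (forall (a : CC) c, V c -> V (fun k => Cmult a (c k))) /\
  (* l^2 = V + span(e_1,...,e_m) for some finite list of l^2 vectors *)
  exists e : list (nat -> CC), (forall v, In v e -> in_l2 v) /\
    forall c, in_l2 c -> exists (v : nat -> CC) (a : nat -> CC),
      V v /\ forall k, c k = Cplus (v k)
        (fold_right Cplus (RtoC 0)
           (map (fun i => Cmult (a i) (nth i e (fun _ => RtoC 0) k))
                (seq 0 (length e)))).

Definition pseudo_codual {H : HilbertSpace} (g f : nat -> H) : Prop :=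
  exists V, finite_codim_subspace V /\
    forall (n : nat) (c : nat -> CC), V c ->
      cseries (fun k => Cmult (hinner (g n) (f k)) (c k)) (c n).

(* Only the Bessel property of (f_n) is used.  The Bessel bound of (g_n) gives the
   upper Riesz bound on every tail, so if (g_n) is not pseudo-Riesz, every tail
   (g_n)_(n >= M) violates the lower bound A = 1 / (2 (m+1) B_f), where m is the number
   of vectors spanning a complement of V.  This produces m+1 disjointly supported finite
   blocks c_j with |sum_n c_j(n) g_n|^2 < A |c_j|^2, and some nontrivial combination
   y = sum_j b_j conj(c_j) lies in V.  For y in V the codual relation rewrites
   sum_n c(n) y_n as sum_k <sum_n c(n) g_n, f_k> y_k, so by Cauchy-Schwarz
   |sum_n c(n) y_n|^2 <= B_f |y|^2 |sum_n c(n) g_n|^2.  For c = c_j the left side is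
   |b_j|^2 |c_j|^4, whence |b_j|^2 |c_j|^2 <= |y|^2 / (2 (m+1)); summing over j gives
   |y|^2 <= |y|^2 / 2, so y = 0, contradicting b <> 0. *)

From Stdlib Require Import Reals List Lia Lra Psatz Classical FunctionalExtensionality IndefiniteDescription.
From Coquelicot Require Import Coquelicot.
Open Scope R_scope.

(* Coquelicot's generic [plus], [mult] and [zero] hide [Cplus], [Cmult], [RtoC 0]
   (and their real counterparts) from [ring] and [field]. *)
Ltac unfold_ops :=
  repeat match goal with
  | |- context [@plus ?G ?x ?y] =>
      first [ change (@plus G x y) with (Cplus x y) | change (@plus G x y) with (Rplus x y) ]
  | |- context [@mult ?K ?x ?y] => change (@mult K x y) with (Cmult x y)
  | |- context [@zero ?G] => first [ change (@zero G) with (RtoC 0) | change (@zero G) with 0 ]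
  end.

Ltac C_ring := unfold_ops; match goal with |- ?a = ?b => change (@eq C a b) end; ring.
Ltac R_ring := unfold_ops; match goal with |- ?a = ?b => change (@eq R a b) end; ring.
Ltac C_field := unfold_ops; match goal with |- ?a = ?b => change (@eq C a b) end; field; auto.

Section FiniteSums.

Context {G : AbelianMonoid}.

Lemma sum_n_zero (a : nat -> G) N :
  (forall n, (n <= N)%nat -> a n = zero) -> sum_n a N = zero.
Proof.
  intros Ha. rewrite (sum_n_ext_loc a (fun _ => zero)) by exact Ha.
  apply sum_n_m_const_zero.
Qed.

Lemma sum_n_single (a : nat -> G) N j : (j <= N)%nat ->
  (forall n, (n <= N)%nat -> n <> j -> a n = zero) -> sum_n a N = a j.
Proof.
  induction N as [|N IH]; intros Hj Ha.
  - replace j with 0%nat by lia. apply sum_O.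
  - rewrite sum_Sn. destruct (Nat.eq_dec j (S N)) as [->|Hne].
    + rewrite sum_n_zero, plus_zero_l; [reflexivity|]. intros n Hn; apply Ha; lia.
    + rewrite IH, (Ha (S N)), plus_zero_r by (lia || (intros; apply Ha; lia)).
      reflexivity.
Qed.

Lemma sum_n_stable (a : nat -> G) N K : (N <= K)%nat ->
  (forall n, (N < n)%nat -> a n = zero) -> sum_n a K = sum_n a N.
Proof.
  intros HNK Ha. induction HNK as [|K HNK IH]; [reflexivity|].
  rewrite sum_Sn, IH, (Ha (S K)), plus_zero_r by lia. reflexivity.
Qed.

End FiniteSums.

Lemma sum_n_nonneg (a : nat -> R) N : (forall n, 0 <= a n) -> 0 <= sum_n a N.
Proof.
  intros Ha. induction N as [|N IH].
  - rewrite sum_O. apply Ha.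
  - rewrite sum_Sn. specialize (Ha (S N)). unfold_ops. lra.
Qed.

Lemma sum_n_le (a b : nat -> R) N :
  (forall n, (n <= N)%nat -> a n <= b n) -> sum_n a N <= sum_n b N.
Proof.
  induction N as [|N IH]; intros Hab.
  - rewrite !sum_O. apply Hab. lia.
  - rewrite !sum_Sn. unfold_ops. apply Rplus_le_compat; [apply IH; intros n Hn|]; apply Hab; lia.
Qed.

Lemma sum_n_le_mono (a : nat -> R) N K : (forall n, 0 <= a n) -> (N <= K)%nat ->
  sum_n a N <= sum_n a K.
Proof.
  intros Ha HNK. induction HNK as [|K HNK IH]; [lra|].
  rewrite sum_Sn. specialize (Ha (S K)). unfold_ops. lra.
Qed.

Lemma sum_n_le_Series (a : nat -> R) N : (forall n, 0 <= a n) -> ex_series a ->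
  sum_n a N <= Series a.
Proof.
  intros Ha Hex. apply is_lim_seq_incr_compare; [exact (Series_correct _ Hex)|].
  intros n. rewrite sum_Sn. specialize (Ha (S n)). unfold_ops. lra.
Qed.

Lemma sum_n_Cplus (u v : nat -> C) N :
  sum_n (fun j => Cplus (u j) (v j)) N = Cplus (sum_n u N) (sum_n v N).
Proof. exact (sum_n_plus u v N). Qed.

Lemma sum_n_Cmult_l (w : C) (u : nat -> C) N :
  sum_n (fun j => Cmult w (u j)) N = Cmult w (sum_n u N).
Proof. exact (sum_n_mult_l (K := C_Ring) w u N). Qed.

Lemma sum_n_Cmult_r (w : C) (u : nat -> C) N :
  sum_n (fun j => Cmult (u j) w) N = Cmult (sum_n u N) w.
Proof. exact (sum_n_mult_r (K := C_Ring) w u N). Qed.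

Lemma sum_n_RtoC (r : nat -> R) N : sum_n (fun n => RtoC (r n)) N = RtoC (sum_n r N).
Proof.
  induction N as [|N IH]; [now rewrite !sum_O|].
  rewrite !sum_Sn, IH. unfold_ops. now rewrite RtoC_plus.
Qed.

Lemma Cconj_0 : Cconj (RtoC 0) = RtoC 0.
Proof. apply injective_projections; simpl; ring. Qed.

Lemma Cmod_sum_n (F : nat -> C) N : Cmod (sum_n F N) <= sum_n (fun n => Cmod (F n)) N.
Proof. exact (norm_sum_n_m (K := C_AbsRing) (V := C_NormedModule) F 0 N). Qed.

Lemma discriminant_le (A P B : R) : 0 <= A ->
  (forall t, 0 <= A * t ^ 2 + 2 * P * t + B) -> P ^ 2 <= A * B.
Proof.
  intros HA Hq. destruct (Req_dec A 0) as [->|HA0].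
  - destruct (Req_dec P 0) as [->|HP]; [specialize (Hq 0); nra|].
    specialize (Hq (- (B + 1) / (2 * P))).
    replace (0 * (- (B + 1) / (2 * P)) ^ 2 + 2 * P * (- (B + 1) / (2 * P)) + B) with (-1)
      in Hq by (field; auto). lra.
  - specialize (Hq (- P / A)).
    replace (A * (- P / A) ^ 2 + 2 * P * (- P / A) + B) with (B - P ^ 2 / A) in Hq
      by (field; auto).
    assert (Hdiv : P ^ 2 / A * A = P ^ 2) by (field; auto).
    assert (0 < A) by lra. nra.
Qed.

Lemma sum_n_Cauchy_Schwarz (a b : nat -> R) N :
  sum_n (fun n => a n * b n) N ^ 2
    <= sum_n (fun n => a n ^ 2) N * sum_n (fun n => b n ^ 2) N.
Proof.
  apply discriminant_le; [apply sum_n_nonneg; intros; apply pow2_ge_0|].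
  intros t.
  replace (sum_n (fun n => a n ^ 2) N * t ^ 2 + 2 * sum_n (fun n => a n * b n) N * t
           + sum_n (fun n => b n ^ 2) N)
    with (sum_n (fun n => (a n * t + b n) ^ 2) N).
  - apply sum_n_nonneg. intros; apply pow2_ge_0.
  - induction N as [|N IH]; [rewrite !sum_O; R_ring|].
    rewrite !sum_Sn, IH. R_ring.
Qed.

Lemma Cmod_sum_n_mult_sq (u v : nat -> C) N :
  Cmod (sum_n (fun n => Cmult (u n) (v n)) N) ^ 2
    <= sum_n (fun n => Cmod (u n) ^ 2) N * sum_n (fun n => Cmod (v n) ^ 2) N.
Proof.
  eapply Rle_trans;
    [|apply (sum_n_Cauchy_Schwarz (fun n => Cmod (u n)) (fun n => Cmod (v n)))].
  apply pow_incr. split; [apply Cmod_ge_0|].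
  eapply Rle_trans; [apply Cmod_sum_n|].
  apply sum_n_le. intros n _. rewrite Cmod_mult. lra.
Qed.

Definition l2sq (c : nat -> C) (N : nat) : R := sum_n (fun n => Cmod (c n) ^ 2) N.

Lemma l2sq_nonneg c N : 0 <= l2sq c N.
Proof. apply sum_n_nonneg. intros; apply pow2_ge_0. Qed.

Section HilbertSpaceFacts.

Context {H : HilbertSpace}.

Definition synthesis (g : nat -> H) (c : nat -> C) (N : nat) : H :=
  sum_n (fun n => scal (c n) (g n)) N.

Definition Bessel_with (f : nat -> H) (B : R) : Prop :=
  forall x : H, ex_series (fun n => Cmod (hinner x (f n)) ^ 2) /\
    Series (fun n => Cmod (hinner x (f n)) ^ 2) <= B * hnorm x ^ 2.

Lemma hnorm_sq (x : H) : hnorm x ^ 2 = Re (hinner x x).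
Proof. unfold hnorm. rewrite <- Rsqr_pow2. apply Rsqr_sqrt, hinner_pos. Qed.

Lemma hinner_synthesis_l g c N (y : H) :
  hinner (synthesis g c N) y = sum_n (fun n => Cmult (c n) (hinner (g n) y)) N.
Proof.
  unfold synthesis. induction N as [|N IH].
  - rewrite !sum_O. apply hinner_scal_l.
  - rewrite !sum_Sn, hinner_add_l, hinner_scal_l, IH. reflexivity.
Qed.

Lemma Bessel_partial_le f B : Bessel_with f B ->
  forall x N, sum_n (fun n => Cmod (hinner x (f n)) ^ 2) N <= B * hnorm x ^ 2.
Proof.
  intros Hf x N. destruct (Hf x) as [Hex Hle].
  eapply Rle_trans; [apply sum_n_le_Series|]; auto. intros; apply pow2_ge_0.
Qed.

(* [|x|^4 <= |<x,x>|^2 <= (sum |c_n|^2) (sum |<x,g_n>|^2) <= (sum |c_n|^2) B |x|^2]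
   for [x = sum c_n g_n]. *)
Lemma Bessel_synthesis_le g B : 0 <= B -> Bessel_with g B ->
  forall c N, hnorm (synthesis g c N) ^ 2 <= B * l2sq c N.
Proof.
  intros HB Hg c N. set (x := synthesis g c N).
  assert (HX : hnorm x ^ 2 <= Cmod (hinner x x)).
  { rewrite hnorm_sq. eapply Rle_trans; [apply Rle_abs | apply re_le_Cmod]. }
  assert (Hcs : Cmod (hinner x x) ^ 2 <= l2sq c N * (B * hnorm x ^ 2)).
  { unfold x at 1. rewrite hinner_synthesis_l.
    eapply Rle_trans; [apply Cmod_sum_n_mult_sq|].
    apply Rmult_le_compat_l; [apply l2sq_nonneg|].
    eapply Rle_trans; [|apply (Bessel_partial_le g B Hg x N)].
    apply sum_n_le. intros n _. rewrite hinner_conj, Cmod_conj. lra. }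
  pose proof (pow2_ge_0 (hnorm x)). pose proof (l2sq_nonneg c N).
  assert (hnorm x ^ 2 * hnorm x ^ 2 <= (l2sq c N * B) * hnorm x ^ 2) by nra.
  destruct (Req_dec (hnorm x ^ 2) 0) as [E|E]; [rewrite E; nra|].
  apply Rmult_le_reg_r with (hnorm x ^ 2); nra.
Qed.

End HilbertSpaceFacts.

Lemma cseries_Cmod_sq_le (a : nat -> C) l M : cseries a l ->
  (forall K, Cmod (sum_n a K) ^ 2 <= M) -> Cmod l ^ 2 <= M.
Proof.
  intros Ha HM.
  assert (Hl : is_lim_seq (fun K => Cmod (sum_n a K)) (Cmod l)).
  { eapply filterlim_comp;
      [exact Ha | apply (filterlim_norm (K := C_AbsRing) (V := C_NormedModule))]. }
  assert (Hle : Rbar_le (Cmod l * Cmod l) M).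
  { apply (is_lim_seq_le (fun K => Cmod (sum_n a K) * Cmod (sum_n a K)) (fun _ => M)).
    - intros K. specialize (HM K). simpl in HM. nra.
    - exact (is_lim_seq_mult' _ _ _ _ Hl Hl).
    - apply is_lim_seq_const. }
  simpl in Hle. simpl. nra.
Qed.

Lemma cseries_sum_n (a : nat -> nat -> C) (l : nat -> C) N :
  (forall n, cseries (a n) (l n)) ->
  cseries (fun k => sum_n (fun n => a n k) N) (sum_n l N).
Proof.
  intros Ha. induction N as [|N IH].
  - rewrite sum_O. eapply is_series_ext; [|apply (Ha 0%nat)]. intros k. now rewrite sum_O.
  - rewrite sum_Sn. eapply is_series_ext; [|exact (is_series_plus _ _ _ _ IH (Ha (S N)))].
    intros k. now rewrite sum_Sn.
Qed.

Section CodualPairing.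

Context {H : HilbertSpace} (f g : nat -> H) (Bf : R) (y : nat -> C) (D : R).
Hypothesis Hf : Bessel_with f Bf.
Hypothesis Hcodual : forall n, cseries (fun k => Cmult (hinner (g n) (f k)) (y k)) (y n).
Hypothesis Hy : forall K, l2sq y K <= D.

Lemma codual_pairing_le c N :
  Cmod (sum_n (fun n => Cmult (c n) (y n)) N) ^ 2
    <= D * Bf * hnorm (synthesis g c N) ^ 2.
Proof.
  set (x := synthesis g c N).
  assert (Hx : cseries (fun k => Cmult (hinner x (f k)) (y k))
                       (sum_n (fun n => Cmult (c n) (y n)) N)).
  { eapply is_series_ext;
      [|apply (cseries_sum_n (fun n k => Cmult (c n) (Cmult (hinner (g n) (f k)) (y k))));
        intros n; exact (is_series_scal (c n) _ _ (Hcodual n))].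
    intros k. unfold x. rewrite hinner_synthesis_l.
    rewrite <- sum_n_Cmult_r. apply sum_n_ext. intros n. C_ring. }
  apply (cseries_Cmod_sq_le _ _ _ Hx). intros K.
  eapply Rle_trans; [apply Cmod_sum_n_mult_sq|].
  rewrite Rmult_comm, Rmult_assoc.
  apply Rmult_le_compat; [apply l2sq_nonneg | apply sum_n_nonneg; intros; apply pow2_ge_0
                         | apply Hy | apply Bessel_partial_le, Hf].
Qed.

End CodualPairing.

Definition swap_last (p N j : nat) : nat :=
  if Nat.eqb j p then N else if Nat.eqb j N then p else j.

Lemma swap_last_involutive p N j : swap_last p N (swap_last p N j) = j.
Proof.
  unfold swap_last.
  destruct (Nat.eqb_spec j p) as [->|Hjp]; destruct (Nat.eqb_spec N p);
    try destruct (Nat.eqb_spec j N); subst; rewrite ?Nat.eqb_refl;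
    repeat match goal with |- context [Nat.eqb ?x ?y] =>
      destruct (Nat.eqb_spec x y) end; congruence.
Qed.

Lemma swap_last_le p N j : (p <= N)%nat -> (j <= N)%nat -> (swap_last p N j <= N)%nat.
Proof.
  unfold swap_last. intros Hp Hj.
  destruct (Nat.eqb_spec j p); [lia|]. destruct (Nat.eqb_spec j N); lia.
Qed.

Lemma sum_n_update (F : nat -> C) x p N : (p <= N)%nat ->
  Cplus (sum_n (fun j => if Nat.eqb j p then x else F j) N) (F p) = Cplus (sum_n F N) x.
Proof.
  induction N as [|N IH]; intros Hp.
  - replace p with 0%nat by lia. rewrite !sum_O, Nat.eqb_refl. C_ring.
  - rewrite !sum_Sn. destruct (Nat.eq_dec p (S N)) as [->|Hne].
    + rewrite Nat.eqb_refl, (sum_n_ext_loc _ F).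
      * C_ring.
      * intros j Hj. destruct (Nat.eqb_spec j (S N)); [lia | reflexivity].
    + destruct (Nat.eqb_spec (S N) p); [lia|]. unfold_ops.
      transitivity (Cplus (Cplus (sum_n (fun j => if Nat.eqb j p then x else F j) N) (F p))
                          (F (S N))); [C_ring|].
      rewrite IH by lia. C_ring.
Qed.

Lemma sum_n_swap_last (F : nat -> C) p N : (p <= N)%nat ->
  sum_n (fun j => F (swap_last p N j)) N = sum_n F N.
Proof.
  intros Hp. destruct (Nat.eq_dec p N) as [->|Hne].
  - apply sum_n_ext. intros j. unfold swap_last.
    destruct (Nat.eqb_spec j N) as [->|]; reflexivity.
  - destruct N as [|N]; [lia|]. rewrite !sum_Sn.
    rewrite (sum_n_ext_loc _ (fun j => if Nat.eqb j p then F (S N) else F j)).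
    + replace (swap_last p (S N) (S N)) with p.
      * apply sum_n_update. lia.
      * unfold swap_last. rewrite Nat.eqb_refl. destruct (Nat.eqb_spec (S N) p); lia.
    + intros j Hj. unfold swap_last. destruct (Nat.eqb_spec j p); [reflexivity|].
      destruct (Nat.eqb_spec j (S N)); [lia | reflexivity].
Qed.

Definition nontrivial_relation (a : nat -> nat -> C) (m : nat) (b : nat -> C) : Prop :=
  (exists j, (j <= m)%nat /\ b j <> RtoC 0) /\
  forall i, (i < m)%nat -> sum_n (fun j => Cmult (b j) (a j i)) m = RtoC 0.

Lemma nontrivial_relation_swap_last a m p b : (p <= m)%nat ->
  nontrivial_relation (fun j => a (swap_last p m j)) m b ->
  nontrivial_relation a m (fun j => b (swap_last p m j)).
Proof.
  intros Hp [[j0 [Hj0 Hb0]] Hb]. split.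
  - exists (swap_last p m j0). rewrite swap_last_involutive.
    split; [apply swap_last_le|]; assumption.
  - intros i Hi. rewrite <- (sum_n_swap_last (fun j => Cmult (b (swap_last p m j)) (a j i)) p m Hp).
    rewrite <- (Hb i Hi). apply sum_n_ext. intros j. now rewrite swap_last_involutive.
Qed.

Lemma nontrivial_relation_zero_row a m b :
  nontrivial_relation a m b -> (forall j, (j <= S m)%nat -> a j m = RtoC 0) ->
  nontrivial_relation a (S m) (fun j => if Nat.leb j m then b j else RtoC 0).
Proof.
  intros [[j0 [Hj0 Hb0]] Hb] Hrow. split.
  - exists j0. rewrite (proj2 (Nat.leb_le _ _)) by lia. auto.
  - intros i Hi. rewrite sum_Sn, (proj2 (Nat.leb_gt _ _)) by lia.
    rewrite (sum_n_ext_loc _ (fun j => Cmult (b j) (a j i)))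
      by (intros j Hj; now rewrite (proj2 (Nat.leb_le _ _) Hj)).
    destruct (Nat.eq_dec i m) as [->|Hne].
    + rewrite sum_n_zero; [C_ring|]. intros j Hj. rewrite Hrow by lia. C_ring.
    + rewrite Hb by lia. C_ring.
Qed.

(* Eliminate the last coordinate with the pivot [a (S m)], solve the reduced system of
   [m+1] vectors in [C^m], and recover the pivot coefficient. *)
Lemma nontrivial_relation_last_pivot m a :
  (forall a', exists b, nontrivial_relation a' m b) -> a (S m) m <> RtoC 0 ->
  exists b, nontrivial_relation a (S m) b.
Proof.
  intros IH Hr.
  set (red := fun j i => Cminus (a j i) (Cmult (Cdiv (a j m) (a (S m) m)) (a (S m) i))).
  destruct (IH red) as [b [[j0 [Hj0 Hb0]] Hb]].
  set (t := sum_n (fun j => Cmult (b j) (a j m)) m).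
  set (d := fun j => if Nat.leb j m then b j else Copp (Cdiv t (a (S m) m))).
  assert (Hd : forall i, sum_n (fun j => Cmult (d j) (a j i)) (S m)
                         = sum_n (fun j => Cmult (b j) (red j i)) m).
  { intros i. rewrite sum_Sn.
    rewrite (sum_n_ext_loc _ (fun j => Cmult (b j) (a j i)))
      by (intros j Hj; unfold d; now rewrite (proj2 (Nat.leb_le _ _) Hj)).
    rewrite (sum_n_ext (fun j => Cmult (b j) (red j i))
      (fun j => Cplus (Cmult (b j) (a j i))
                      (Cmult (Cmult (b j) (a j m)) (Copp (Cdiv (a (S m) i) (a (S m) m))))))
      by (intros j; unfold red; C_field).
    rewrite sum_n_Cplus, sum_n_Cmult_r. fold t. unfold d.
    rewrite (proj2 (Nat.leb_gt _ _)) by lia. C_field. }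
  exists d. split.
  - exists j0. unfold d. rewrite (proj2 (Nat.leb_le _ _)) by lia. auto.
  - intros i Hi. rewrite Hd. destruct (Nat.eq_dec i m) as [->|Hne]; [|apply Hb; lia].
    apply (sum_n_zero (G := C_AbelianMonoid)). intros j _. unfold red. C_field.
Qed.

Lemma exists_nontrivial_relation m : forall a, exists b, nontrivial_relation a m b.
Proof.
  induction m as [|m IH]; intros a.
  - exists (fun _ => RtoC 1). split; [|intros; lia].
    exists 0%nat. split; [lia|]. intros E. apply (f_equal fst) in E. simpl in E. lra.
  - destruct (classic (exists p, (p <= S m)%nat /\ a p m <> RtoC 0))
      as [[p [Hp Hpm]] | Hnone].
    + destruct (nontrivial_relation_last_pivot m (fun j => a (swap_last p (S m) j)) IH)
        as [b Hb].
      * unfold swap_last. rewrite Nat.eqb_refl.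
        destruct (Nat.eqb_spec (S m) p) as [<-|]; assumption.
      * eexists. apply nontrivial_relation_swap_last; eassumption.
    + destruct (IH a) as [b Hb]. eexists. apply (nontrivial_relation_zero_row a m b Hb).
      intros j Hj. apply NNPP. intros Hj0. apply Hnone. eauto.
Qed.

Lemma fold_right_Cplus_zero (F : nat -> C) (l : list nat) :
  (forall i, In i l -> F i = RtoC 0) -> fold_right Cplus (RtoC 0) (map F l) = RtoC 0.
Proof.
  induction l as [|i l IH]; intros HF; [reflexivity|]. cbn [map fold_right].
  rewrite IH, HF; [C_ring | now left | intros j Hj; apply HF; now right].
Qed.

Lemma sum_n_fold_right_Cplus (b : nat -> C) (F : nat -> nat -> C) (l : list nat) N :
  sum_n (fun j => Cmult (b j) (fold_right Cplus (RtoC 0) (map (F j) l))) N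
    = fold_right Cplus (RtoC 0) (map (fun i => sum_n (fun j => Cmult (b j) (F j i)) N) l).
Proof.
  induction l as [|i l IH]; cbn [map fold_right].
  - apply (sum_n_zero (G := C_AbelianMonoid)). intros; C_ring.
  - rewrite <- IH, <- sum_n_Cplus. apply sum_n_ext. intros; C_ring.
Qed.

Lemma subspace_lincomb (V : (nat -> C) -> Prop) :
  (forall c d, V c -> V d -> V (fun k => Cplus (c k) (d k))) ->
  (forall (a : C) c, V c -> V (fun k => Cmult a (c k))) ->
  forall (w : nat -> nat -> C) (b : nat -> C) N, (forall j, V (w j)) ->
    V (fun k => sum_n (fun j => Cmult (b j) (w j k)) N).
Proof.
  intros Vadd Vscal w b N Hw. induction N as [|N IH].
  - replace (fun k => sum_n (fun j => Cmult (b j) (w j k)) 0) with (fun k => Cmult (b 0%nat) (w 0%nat k))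
      by (apply functional_extensionality; intros k; now rewrite sum_O).
    apply Vscal, Hw.
  - replace (fun k => sum_n (fun j => Cmult (b j) (w j k)) (S N))
      with (fun k => Cplus (sum_n (fun j => Cmult (b j) (w j k)) N) (Cmult (b (S N)) (w (S N) k)))
      by (apply functional_extensionality; intros k; now rewrite sum_Sn).
    apply Vadd; [exact IH | apply Vscal, Hw].
Qed.

(* With [l2 = V + span(e_0, ..., e_(m-1))], the [e]-coordinates of [m+1] vectors are
   linearly dependent, and the same relation puts their combination into [V]. *)
Lemma finite_codim_nontrivial_lincomb (V : (nat -> C) -> Prop) : finite_codim_subspace V ->
  exists m, forall h : nat -> nat -> C, (forall j, in_l2 (h j)) ->
    exists b, (exists j, (j <= m)%nat /\ b j <> RtoC 0) /\
      V (fun k => sum_n (fun j => Cmult (b j) (h j k)) m).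
Proof.
  intros [_ [_ [Vadd [Vscal [e [_ Hdec]]]]]]. exists (length e). intros h Hh.
  set (coord a k := fun i => Cmult (a i) (nth i e (fun _ => RtoC 0) k)).
  destruct (functional_choice (fun j (va : (nat -> C) * (nat -> C)) => V (fst va) /\
              forall k, h j k = Cplus (fst va k)
                (fold_right Cplus (RtoC 0) (map (coord (snd va) k) (seq 0 (length e))))))
    as [va Hva].
  { intros j. destruct (Hdec (h j) (Hh j)) as [v [a [Hv Hk]]]. now exists (v, a). }
  destruct (exists_nontrivial_relation (length e) (fun j i => snd (va j) i))
    as [b [Hb0 Hb]].
  exists b. split; [exact Hb0|].
  replace (fun k => sum_n (fun j => Cmult (b j) (h j k)) (length e))
    with (fun k => sum_n (fun j => Cmult (b j) (fst (va j) k)) (length e)).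
  { apply subspace_lincomb; [exact Vadd | exact Vscal | intros j; apply Hva]. }
  apply functional_extensionality. intros k.
  rewrite (sum_n_ext (fun j => Cmult (b j) (h j k))
    (fun j => Cplus (Cmult (b j) (fst (va j) k))
      (Cmult (b j) (fold_right Cplus (RtoC 0) (map (coord (snd (va j)) k) (seq 0 (length e))))))).
  2:{ intros j. rewrite (proj2 (Hva j) k). C_ring. }
  rewrite sum_n_Cplus, sum_n_fold_right_Cplus, fold_right_Cplus_zero; [now rewrite Cplus_0_r|].
  intros i Hi. apply in_seq in Hi. unfold coord.
  rewrite (sum_n_ext _ (fun j => Cmult (Cmult (b j) (snd (va j) i)) (nth i e (fun _ => RtoC 0) k)))
    by (intros; C_ring).
  rewrite sum_n_Cmult_r, Hb by lia. C_ring.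
Qed.

Lemma in_l2_of_vanishing (c : nat -> C) N : (forall n, (N < n)%nat -> c n = RtoC 0) -> in_l2 c.
Proof.
  intros Hc. apply (ex_series_incr_n _ (S N)). exists 0.
  eapply filterlim_ext; [|apply filterlim_const]. intros K. simpl.
  rewrite (sum_n_ext _ (fun _ => 0)), sum_n_const; [R_ring|].
  intros n. rewrite Hc, Cmod_0 by lia. R_ring.
Qed.

Lemma sum_n_single_support (u b : nat -> C) m :
  (forall i j, (i <= m)%nat -> (j <= m)%nat -> i <> j -> u i = RtoC 0 \/ u j = RtoC 0) ->
  (forall j, (j <= m)%nat ->
     Cmult (u j) (sum_n (fun i => Cmult (b i) (Cconj (u i))) m)
       = Cmult (b j) (RtoC (Cmod (u j) ^ 2))) /\
  Cmod (sum_n (fun i => Cmult (b i) (Cconj (u i))) m) ^ 2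
    = sum_n (fun i => Cmod (b i) ^ 2 * Cmod (u i) ^ 2) m.
Proof.
  intros Hu.
  destruct (classic (exists j, (j <= m)%nat /\ u j <> RtoC 0)) as [[j [Hj Hj0]] | Hnone].
  - assert (Hzero : forall i, (i <= m)%nat -> i <> j -> u i = RtoC 0)
      by (intros i Hi Hij; destruct (Hu i j Hi Hj Hij); tauto).
    rewrite (sum_n_single (fun i => Cmult (b i) (Cconj (u i))) m j Hj),
            (sum_n_single (fun i => Cmod (b i) ^ 2 * Cmod (u i) ^ 2) m j Hj).
    + split.
      * intros i Hi. destruct (Nat.eq_dec i j) as [->|Hij].
        -- rewrite Cmod2_conj. C_ring.
        -- rewrite (Hzero i Hi Hij), Cmod_0, pow_i by lia. C_ring.
      * rewrite Cmod_mult, Cmod_conj. ring.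
    + intros i Hi Hij. rewrite (Hzero i Hi Hij), Cmod_0. R_ring.
    + intros i Hi Hij. rewrite (Hzero i Hi Hij), Cconj_0. C_ring.
  - assert (Hzero : forall i, (i <= m)%nat -> u i = RtoC 0)
      by (intros i Hi; apply NNPP; intros Hi0; apply Hnone; eauto).
    rewrite (sum_n_zero (fun i => Cmult (b i) (Cconj (u i)))),
            (sum_n_zero (fun i => Cmod (b i) ^ 2 * Cmod (u i) ^ 2)).
    + split.
      * intros i Hi. rewrite (Hzero i Hi), Cmod_0, pow_i by lia. C_ring.
      * unfold_ops. rewrite Cmod_0. ring.
    + intros i Hi. rewrite (Hzero i Hi), Cmod_0. R_ring.
    + intros i Hi. rewrite (Hzero i Hi), Cconj_0. C_ring.
Qed.

Section SmallBlocks.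

Context {H : HilbertSpace} (g : nat -> H) (A : R).

Definition small_block (c : nat -> C) (N : nat) : Prop :=
  0 < l2sq c N /\ hnorm (synthesis g c N) ^ 2 < A * l2sq c N.

Lemma small_block_extend c N K : (N <= K)%nat ->
  (forall n, (N < n)%nat -> c n = RtoC 0) -> small_block c N -> small_block c K.
Proof.
  intros HNK Hc. unfold small_block, l2sq, synthesis.
  rewrite (sum_n_stable (fun n => Cmod (c n) ^ 2) N K HNK),
          (sum_n_stable (fun n => scal (c n) (g n)) N K HNK); [tauto | |].
  - intros n Hn. rewrite Hc by exact Hn. exact (scal_zero_l (g n)).
  - intros n Hn. rewrite Hc, Cmod_0 by exact Hn. R_ring.
Qed.

Lemma small_block_of_not_Riesz_off B M : 0 < A -> 0 < B -> Bessel_with g B ->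
  ~ Riesz_off g (seq 0 M) ->
  exists c N, (forall n, (n < M \/ N < n)%nat -> c n = RtoC 0) /\ small_block c N.
Proof.
  intros HA HB Hg Hnot. apply NNPP. intros Hnone. apply Hnot.
  exists A, B. split; [exact HA|]. split; [exact HB|].
  intros N c Hc. split; [|apply Bessel_synthesis_le; [lra | exact Hg]].
  set (c' n := if Nat.leb n N then c n else RtoC 0).
  assert (Hsq : l2sq c' N = l2sq c N).
  { apply sum_n_ext_loc. intros n Hn. unfold c'. now rewrite (proj2 (Nat.leb_le _ _) Hn). }
  assert (Hsyn : synthesis g c' N = synthesis g c N).
  { apply sum_n_ext_loc. intros n Hn. unfold c'. now rewrite (proj2 (Nat.leb_le _ _) Hn). }
  change (A * l2sq c N <= hnorm (synthesis g c N) ^ 2).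
  apply Rnot_lt_le. intros Hlt. apply Hnone. exists c', N. split.
  - intros n Hn. unfold c'. destruct (Nat.leb_spec n N); [|reflexivity].
    apply Hc, in_seq. lia.
  - unfold small_block. rewrite Hsq, Hsyn. split; [|exact Hlt].
    pose proof (pow2_ge_0 (hnorm (synthesis g c N))).
    apply Rmult_lt_reg_l with A; lra.
Qed.

Lemma disjoint_small_blocks :
  (forall M, exists c N, (forall n, (n < M \/ N < n)%nat -> c n = RtoC 0) /\ small_block c N) ->
  forall m, exists (blk : nat -> nat -> C) N,
    (forall j, (j <= m)%nat -> small_block (blk j) N) /\
    (forall j n, (N < n)%nat -> blk j n = RtoC 0) /\
    (forall i j n, (i <= m)%nat -> (j <= m)%nat -> i <> j ->
       blk i n = RtoC 0 \/ blk j n = RtoC 0).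
Proof.
  intros Hsmall m. induction m as [|m [blk [N [Hs [Hv Hd]]]]].
  - destruct (Hsmall 0%nat) as [c [N [Hc Hcs]]]. exists (fun _ => c), N.
    split; [intros; exact Hcs|]. split; [intros j n Hn; apply Hc; lia | intros; lia].
  - destruct (Hsmall (S N)) as [c [N' [Hc Hcs]]].
    exists (fun j => if Nat.eqb j (S m) then c else blk j), (Nat.max N N'). split; [|split].
    + intros j Hj. destruct (Nat.eqb_spec j (S m)) as [_|Hjm].
      * apply small_block_extend with N'; [lia | intros n Hn; apply Hc; lia | exact Hcs].
      * apply small_block_extend with N; [lia | intros n Hn; apply Hv, Hn | apply Hs; lia].
    + intros j n Hn. destruct (Nat.eqb_spec j (S m)) as [_|_]; [apply Hc | apply Hv]; lia.
    + intros i j n Hi Hj Hij.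
      destruct (Nat.eqb_spec i (S m)) as [Him|Him], (Nat.eqb_spec j (S m)) as [Hjm|Hjm];
        [lia | | | apply Hd; lia].
      * destruct (Nat.le_gt_cases n N); [left; apply Hc | right; apply Hv]; lia.
      * destruct (Nat.le_gt_cases n N); [right; apply Hc | left; apply Hv]; lia.
Qed.

End SmallBlocks.

Definition conj_combination (blk : nat -> nat -> C) (b : nat -> C) (m k : nat) : C :=
  sum_n (fun j => Cmult (b j) (Cconj (blk j k))) m.

Section DisjointBlocks.

Variables (blk : nat -> nat -> C) (b : nat -> C) (m N : nat).
Hypothesis Hvan : forall j n, (N < n)%nat -> blk j n = RtoC 0.
Hypothesis Hdisj : forall i j n, (i <= m)%nat -> (j <= m)%nat -> i <> j ->
  blk i n = RtoC 0 \/ blk j n = RtoC 0.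

Let Hsingle n := sum_n_single_support (fun j => blk j n) b m (fun i j => Hdisj i j n).

Lemma l2sq_conj_combination_le K :
  l2sq (conj_combination blk b m) K <= sum_n (fun j => Cmod (b j) ^ 2 * l2sq (blk j) N) m.
Proof.
  assert (HN : l2sq (conj_combination blk b m) N
               = sum_n (fun j => Cmod (b j) ^ 2 * l2sq (blk j) N) m).
  { unfold l2sq, conj_combination. rewrite (sum_n_ext _ _ N (fun n => proj2 (Hsingle n))).
    rewrite sum_n_switch. apply sum_n_ext. intros j.
    exact (sum_n_mult_l (K := R_Ring) _ _ _). }
  rewrite <- HN. destruct (Nat.le_gt_cases K N).
  - apply sum_n_le_mono; [intros; apply pow2_ge_0 | assumption].
  - right. apply sum_n_stable; [lia|]. intros n Hn.
    unfold conj_combination. rewrite (proj2 (Hsingle n)). apply sum_n_zero. intros j _.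
    rewrite Hvan, Cmod_0 by exact Hn. R_ring.
Qed.

Lemma block_pairing_conj_combination j : (j <= m)%nat ->
  sum_n (fun n => Cmult (blk j n) (conj_combination blk b m n)) N
    = Cmult (b j) (RtoC (l2sq (blk j) N)).
Proof.
  intros Hj. unfold conj_combination.
  rewrite (sum_n_ext _ _ N (fun n => proj1 (Hsingle n) j Hj)), sum_n_Cmult_l, sum_n_RtoC.
  reflexivity.
Qed.

End DisjointBlocks.

Section CodualBlocks.

Context {H : HilbertSpace} (f g : nat -> H) (V : (nat -> C) -> Prop) (Bf : R) (m : nat).
Hypothesis HBf : 0 < Bf.
Hypothesis Hf : Bessel_with f Bf.
Hypothesis Hcodual :
  forall n c, V c -> cseries (fun k => Cmult (hinner (g n) (f k)) (c k)) (c n).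
Hypothesis HV : forall h : nat -> nat -> C, (forall j, in_l2 (h j)) ->
  exists b, (exists j, (j <= m)%nat /\ b j <> RtoC 0) /\
    V (fun k => sum_n (fun j => Cmult (b j) (h j k)) m).

Lemma no_disjoint_small_blocks (blk : nat -> nat -> C) N :
  (forall j, (j <= m)%nat -> small_block g (/ (2 * INR (S m) * Bf)) (blk j) N) ->
  (forall j n, (N < n)%nat -> blk j n = RtoC 0) ->
  (forall i j n, (i <= m)%nat -> (j <= m)%nat -> i <> j ->
     blk i n = RtoC 0 \/ blk j n = RtoC 0) ->
  False.
Proof.
  intros Hsmall Hvan Hdisj. set (A := / (2 * INR (S m) * Bf)) in Hsmall.
  destruct (HV (fun j n => Cconj (blk j n))) as [b [[j0 [Hj0 Hb0]] Hy]].
  { intros j. apply (in_l2_of_vanishing _ N). intros n Hn. now rewrite Hvan, Cconj_0. }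
  change (V (conj_combination blk b m)) in Hy.
  set (s j := l2sq (blk j) N).
  set (Y := sum_n (fun j => Cmod (b j) ^ 2 * s j) m : R).
  assert (HY0 : 0 <= Y).
  { apply sum_n_nonneg. intros j. apply Rmult_le_pos; [apply pow2_ge_0 | apply l2sq_nonneg]. }
  assert (Hblock : forall j, (j <= m)%nat -> Cmod (b j) ^ 2 * s j <= Y * Bf * A).
  { intros j Hj. destruct (Hsmall j Hj) as [Hs Hsyn]. fold (s j) in Hs, Hsyn.
    pose proof (codual_pairing_le f g Bf _ Y Hf (fun n => Hcodual n _ Hy)
                  (l2sq_conj_combination_le blk b m N Hvan Hdisj) (blk j) N) as Hpair.
    rewrite (block_pairing_conj_combination blk b m N Hdisj j Hj), Cmod_mult, Cmod_R,
      Rabs_pos_eq in Hpair by apply l2sq_nonneg.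
    fold (s j) in Hpair.
    assert (Hsq : (Cmod (b j) ^ 2 * s j) * s j <= (Y * Bf * A) * s j).
    { assert (0 <= Y * Bf) by nra. nra. }
    apply Rmult_le_reg_r with (s j); assumption. }
  assert (HY : Y <= INR (S m) * (Y * Bf * A)).
  { rewrite <- sum_n_const. apply sum_n_le. exact Hblock. }
  assert (Hhalf : INR (S m) * (Y * Bf * A) = Y / 2).
  { unfold A. field. split; [lra | apply not_0_INR; lia]. }
  rewrite Hhalf in HY. assert (HY' : Y = 0) by lra.
  specialize (Hblock j0 Hj0). rewrite HY', !Rmult_0_l in Hblock.
  destruct (Hsmall j0 Hj0) as [Hs _].
  assert (0 < Cmod (b j0) ^ 2) by (apply pow_lt, Cmod_gt_0, Hb0).
  assert (0 < Cmod (b j0) ^ 2 * s j0) by (apply Rmult_lt_0_compat; assumption).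
  lra.
Qed.

End CodualBlocks.

Theorem mainTheorem4 (H : HilbertSpace) (f g : nat -> H) :
  pseudo_Riesz f -> pseudo_codual g f -> Bessel g -> pseudo_Riesz g.
Proof.
  intros [[Bf [HBf Hf]] _] [V [HV Hcodual]] Hg.
  split; [exact Hg|]. destruct Hg as [Bg [HBg Hg]].
  destruct (finite_codim_nontrivial_lincomb V HV) as [m Hm].
  set (A := / (2 * INR (S m) * Bf)).
  assert (HA : 0 < A).
  { apply Rinv_0_lt_compat. pose proof (lt_0_INR (S m) ltac:(lia)). nra. }
  apply NNPP. intros Hnot.
  assert (Hsmall : forall M, exists c N,
             (forall n, (n < M \/ N < n)%nat -> c n = RtoC 0) /\ small_block g A c N).
  { intros M. apply (small_block_of_not_Riesz_off g A Bg M HA HBg Hg).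
    intros HR. apply Hnot. now exists (seq 0 M). }
  destruct (disjoint_small_blocks g A Hsmall m) as [blk [N [Hs [Hvan Hdisj]]]].
  exact (no_disjoint_small_blocks f g V Bf m HBf Hf Hcodual Hm blk N Hs Hvan Hdisj).
Qed.
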